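(* Let $k\ge 2$ be an integer, $b(k)=\frac{k^k}{(k-1)^{k-1}}$, and \[ f_k(\beta)=\log_{b(k)}\!\left(\left(\frac{1-\beta}{k^2}+\beta\right)\left(\frac{\beta}{k^2}+1-\beta\right)^{k-1}\right)-\frac1k . \] Then $f_k(\beta)\le -1$ for all $\beta\in[0,1]$. *)

From Stdlib Require Import Reals.
Open Scope R_scope.

Definition bk (k : nat) : R := (INR k) ^ k / (INR k - 1) ^ (k - 1).

Definition logb (b x : R) : R := ln x / ln b.

Definition fk (k : nat) (beta : R) : R :=
  logb (bk k)
    (((1 - beta) / (INR k) ^ 2 + beta) *
     (beta / (INR k) ^ 2 + 1 - beta) ^ (k - 1))
  - 1 / INR k.

From Stdlib Require Import Reals Lra Lia.
Open Scope R_scope.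

(* With n = k, a = (1-beta)/n^2 + beta and c = beta/n^2 + 1 - beta we have
   a + c = 1 + 1/n^2, so weighted AM-GM (weights 1 and n-1) gives
   ln a + (n-1) ln c <= (n-1) ln (n-1) - n ln n + n ln (1 + 1/n^2)
                     <= 1/n - ln b(k).
   Since ln b(k) = n ln n - (n-1) ln (n-1) >= 1, dividing by ln b(k) and
   subtracting 1/n yields f_k(beta) <= -1. *)

Lemma ln_le_sub_1 (y : R) : 0 < y -> ln y <= y - 1.
Proof.
  intros Hy. pose proof (exp_ineq1_le (ln y)) as Hexp.
  rewrite exp_ln in Hexp by exact Hy. lra.
Qed.

Lemma ln_div (x y : R) : 0 < x -> 0 < y -> ln (x / y) = ln x - ln y.
Proof.
  intros Hx Hy. unfold Rdiv.
  rewrite ln_mult, ln_Rinv by (try apply Rinv_0_lt_compat; lra). ring.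
Qed.

Lemma ln_ge_1_sub_inv (y : R) : 0 < y -> 1 - / y <= ln y.
Proof.
  intros Hy. pose proof (ln_le_sub_1 (/ y) (Rinv_0_lt_compat y Hy)) as H.
  rewrite ln_Rinv in H by exact Hy. lra.
Qed.

Lemma ln_weighted_am_gm (x y m : R) : 0 < x -> 0 < y -> 0 < m ->
  ln x + m * ln y <= (1 + m) * ln ((x + m * y) / (1 + m)).
Proof.
  intros Hx Hy Hm.
  set (A := (x + m * y) / (1 + m)).
  assert (HA : 0 < A) by (unfold A; apply Rdiv_lt_0_compat; nra).
  assert (Hmean : x / A + m * (y / A) = 1 + m) by (unfold A; field; nra).
  pose proof (ln_le_sub_1 (x / A) (Rdiv_lt_0_compat x A Hx HA)) as Hlx.
  pose proof (ln_le_sub_1 (y / A) (Rdiv_lt_0_compat y A Hy HA)) as Hly.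
  rewrite ln_div in Hlx, Hly by lra.
  assert (Hmly : m * (ln y - ln A) <= m * (y / A - 1))
    by (apply Rmult_le_compat_l; lra).
  lra.
Qed.

Lemma xlnx_increment_ge_1 (n : R) : 2 <= n ->
  1 <= n * ln n - (n - 1) * ln (n - 1).
Proof.
  intros Hn.
  pose proof (ln_ge_1_sub_inv n ltac:(lra)) as Hln.
  pose proof (ln_ge_1_sub_inv (n / (n - 1)) ltac:(apply Rdiv_lt_0_compat; lra))
    as Hratio.
  rewrite ln_div in Hratio by lra.
  replace (/ (n / (n - 1))) with (1 - / n) in Hratio by (field; lra).
  assert (Hinv : / n <= / 2) by (apply Rinv_le_contravar; lra).
  assert (Hstep : (n - 1) * / n <= (n - 1) * (ln n - ln (n - 1)))
    by (apply Rmult_le_compat_l; lra).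
  replace ((n - 1) * / n) with (1 - / n) in Hstep by (field; lra).
  lra.
Qed.

Lemma mixture_pos (n beta : R) : 1 < n -> 0 <= beta <= 1 ->
  0 < (1 - beta) / n ^ 2 + beta /\ 0 < beta / n ^ 2 + 1 - beta.
Proof.
  intros Hn Hb.
  assert (Hu : 0 < / n ^ 2) by (apply Rinv_0_lt_compat; nra).
  unfold Rdiv. split; nra.
Qed.

Lemma ln_mix_product_le (n beta : R) : 1 < n -> 0 <= beta <= 1 ->
  ln ((1 - beta) / n ^ 2 + beta) + (n - 1) * ln (beta / n ^ 2 + 1 - beta)
  <= / n - (n * ln n - (n - 1) * ln (n - 1)).
Proof.
  intros Hn Hb.
  destruct (mixture_pos n beta Hn Hb) as [Ha Hc].
  set (u := / n ^ 2).
  assert (Hu : 0 < u) by (apply Rinv_0_lt_compat; nra).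
  set (a := (1 - beta) / n ^ 2 + beta) in *.
  set (c := beta / n ^ 2 + 1 - beta) in *.
  pose proof (ln_weighted_am_gm a (c / (n - 1)) (n - 1) Ha
    ltac:(apply Rdiv_lt_0_compat; lra) ltac:(lra)) as Hamgm.
  replace (a + (n - 1) * (c / (n - 1))) with (1 + u) in Hamgm
    by (unfold a, c, u; field; lra).
  replace (1 + (n - 1)) with n in Hamgm by ring.
  rewrite !ln_div in Hamgm by lra.
  pose proof (ln_le_sub_1 (1 + u) ltac:(lra)) as Hlu.
  assert (Hnu : n * u = / n) by (unfold u; field; lra).
  nra.
Qed.

Lemma ln_bk (k : nat) : (2 <= k)%nat ->
  ln (bk k) = INR k * ln (INR k) - (INR k - 1) * ln (INR k - 1).
Proof.
  intros Hk.
  assert (Hn : 2 <= INR k) by (apply (le_INR 2); exact Hk).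
  unfold bk.
  rewrite ln_div, !ln_pow, minus_INR by (try apply pow_lt; try lia; lra).
  reflexivity.
Qed.

Theorem lemma4p9 (k : nat) (beta : R) :
  (2 <= k)%nat -> 0 <= beta <= 1 -> fk k beta <= -1.
Proof.
  intros Hk Hb.
  assert (Hn : 2 <= INR k) by (apply (le_INR 2); exact Hk).
  destruct (mixture_pos (INR k) beta ltac:(lra) Hb) as [Ha Hc].
  pose proof (ln_mix_product_le (INR k) beta ltac:(lra) Hb) as Hprod.
  pose proof (xlnx_increment_ge_1 (INR k) Hn) as HL.
  unfold fk, logb.
  rewrite ln_bk, ln_mult, ln_pow, minus_INR by (try apply pow_lt; try lia; lra).
  change (INR 1) with 1.
  set (L := INR k * ln (INR k) - (INR k - 1) * ln (INR k - 1)) in *.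
  set (lnP := ln _ + _) in *.
  assert (HnL : / INR k <= / INR k * L)
    by (rewrite <- (Rmult_1_r (/ INR k)) at 1;
        apply Rmult_le_compat_l; [left; apply Rinv_0_lt_compat|]; lra).
  apply (Rmult_le_reg_r L); [lra|].
  replace ((lnP / L - 1 / INR k) * L) with (lnP - 1 / INR k * L) by (field; lra).
  lra.
Qed.
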